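(* Let $K$ be a field, let $P$ be a convex $n$-gon and let $D$ be a dissection of $P$ which divides $P$ into subpolygons $P_1,\ldots,P_\ell$ with $P_i$ a $d_i$-gon ($d_i\ge 3$). Let $f:\mathrm{diag}(P)\to K$ be the weak frieze with respect to $D$ whose restriction to $\mathrm{diag}(P_i)$ is the constant map with value $1$ for every $i$. Let $M_f$ be the associated weak frieze matrix. Then $$\det(M_f) = (-1)^{\ell-1}\prod_{i=1}^{\ell}(-1)^{d_i-1}(d_i-1) = (-1)^{n-1}\prod_{i=1}^{\ell}(d_i-1).$$
   Context: For a convex polygon with vertices $1,\ldots,n$ (cyclically ordered), a diagonal is any unordered pair $\{i,j\}$ of distinct vertices (including boundary edges); $\mathrm{diag}(P)$ is the set of all diagonals. A diagonal is internal if its endpoints are not cyclic neighbours. Diagonals $\{i,j\}$, $\{k,\ell\}$ cross if cyclically $i<k<j<\ell$ or $i<\ell<j<k$. A dissection is a set of pairwise non-crossing internal diagonals. A map $f:\mathrm{diag}(P)\to K$ (write $f(i,j)=f(\{i,j\})$) is a weak frieze with respect to a dissection $D$ if for every pair of crossing diagonals $\{i,j\},\{k,\ell\}$ with at least one in $D$, $f(i,j)f(k,\ell)=f(i,k)f(j,\ell)+f(i,\ell)f(j,k)$. Given subpolygons cut out by $D$ and weak friezes on them agreeing (with nonzero value) on shared diagonals, there is a unique weak frieze on $P$ with respect to $D$ restricting to them; here this is applied with all pieces constantly $1$. The weak frieze matrix $M_f$ is the symmetric $n\times n$ matrix with entries $m_{i,i}=0$ and $m_{i,j}=f(i,j)$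 for $i\neq j$. *)

(* Vertices of the convex n-gon are 'I_n, cyclically ordered
   0,1,...,n-1. A diagonal {i,j} is represented by the finite set [set i; j]. *)
From HB Require Import structures.
From mathcomp Require Import all_boot all_order all_algebra.
Set Implicit Arguments. Unset Strict Implicit. Unset Printing Implicit Defensive.
Import Order.TTheory GRing.Theory Num.Theory.

Local Open Scope ring_scope.
Section Polygon.
Variable n : nat.

Definition strictly_between (a b x : 'I_n) : bool :=
  ((minn a b < x) && (x < maxn a b))%N.

(* {i,j} and {k,l} cross: four distinct vertices, exactly one of k,l lies on
   each of the two arcs cut out by i and j (i.e. cyclically i<k<j<l or i<l<j<k). *)
Definition cross (i j k l : 'I_n) : bool :=
  [&& k != i, k != j, l != i, l != j &
      strictly_between i j k != strictly_between i j l].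

Definition internal (i j : 'I_n) : bool :=
  [&& i != j, (i.+1 %% n != j)%N & (j.+1 %% n != i)%N].

Definition dissection (D : {set {set 'I_n}}) : Prop :=
  (forall d, d \in D -> exists i j : 'I_n, d = [set i; j] /\ internal i j) /\
  (forall i j k l : 'I_n, [set i; j] \in D -> [set k; l] \in D -> ~~ cross i j k l).

Definition crossed_by (D : {set {set 'I_n}}) (x y : 'I_n) : bool :=
  [exists k, exists l, ([set k; l] \in D) && cross x y k l].

Definition uncrossed (D : {set {set 'I_n}}) (S : {set 'I_n}) : bool :=
  [forall x in S, forall y in S, ~~ crossed_by D x y].

(* The subpolygons P_1,...,P_l cut out by D, given by their vertex sets:
   the maximal vertex sets in which no diagonal is crossed by D. *)
Definition cells (D : {set {set 'I_n}}) : {set {set 'I_n}} :=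
  [set S | maxset (uncrossed D) S].

Definition weak_frieze (K : fieldType) (D : {set {set 'I_n}})
    (f : {set 'I_n} -> K) : Prop :=
  forall i j k l : 'I_n, cross i j k l ->
    ([set i; j] \in D) || ([set k; l] \in D) ->
    f [set i; j] * f [set k; l] =
      f [set i; k] * f [set j; l] + f [set i; l] * f [set j; k].

Definition frieze_matrix (K : fieldType) (f : {set 'I_n} -> K) : 'M[K]_n :=
  \matrix_(i < n, j < n) (if i == j then 0 else f [set i; j]).

End Polygon.

(* Call a vertex set S crossing-closed if every diagonal of D that crosses a pair of vertices
   of S has its endpoints in S: a union of subpolygons, such as the whole polygon. The principal
   minor of M_f on such an S is computed by induction. If no diagonal of D crosses S, then S is
   a single subpolygon with d vertices, on which M_f is J - I, of determinant (-1)^(d-1) (d-1).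
   Otherwise some {a,b} in D crosses S and cuts it into an inner part A and an outer part B
   meeting in {a,b}; the subpolygons of S are those of A together with those of B. For x
   strictly inside and y strictly outside, the frieze relation for the crossing pair {x,y},
   {a,b} with f(a,b) = 1 is the Ptolemy relation m(x,y) = m(x,a) m(b,y) + m(x,b) m(a,y), so
   the off-diagonal block of M_S factors through the rows of a and b, and a Schur complement
   computation gives det M_S = - det M_A det M_B. The two formulas of the theorem agree since
   the sizes d_i of the subpolygons satisfy sum (d_i - 2) = n - 2. *)

From HB Require Import structures.
From mathcomp Require Import all_boot all_order all_algebra all_fingroup zify.
Import GRing.Theory.

Set Implicit Arguments. Unset Strict Implicit. Unset Printing Implicit Defensive.

Lemma perm_enum_setU (T : finType) (X Y : {set T}) :
  [disjoint X & Y] -> perm_eq (enum (X :|: Y)) (enum X ++ enum Y).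
Proof.
move=> dXY; apply: perm_trans (enum_setU X Y) _; rewrite undup_id // cat_uniq !enum_uniq andbT /=.
by apply/hasPn => z; rewrite !mem_enum => zY; rewrite (disjointFl dXY zY).
Qed.

Lemma perm_enum_set2 (T : finType) (a b : T) : a != b -> perm_eq (enum [set a; b]) [:: a; b].
Proof.
move=> ab; apply: uniq_perm; rewrite ?enum_uniq //= ?inE ?ab // => z.
by rewrite mem_enum !inE.
Qed.

Lemma big_setU_disjoint (R : Type) (idx : R) (op : Monoid.com_law idx) (I : finType)
    (A B : {set I}) (F : I -> R) :
  [disjoint A & B] ->
  \big[op/idx]_(i in A :|: B) F i = op (\big[op/idx]_(i in A) F i) (\big[op/idx]_(i in B) F i).
Proof. by move=> dAB; rewrite -bigU //; apply: eq_bigl => i; rewrite !inE. Qed.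

Section BlockDeterminants.
Local Open Scope ring_scope.
Variable R : comNzRingType.

Lemma det_const1_sub1 k : (0 < k)%N ->
  \det (const_mx 1 - 1%:M : 'M[R]_k) = (-1) ^+ (k - 1) * (k - 1)%:R.
Proof.
case: k => // q _; rewrite subn1 /=.
change (\det (const_mx 1 - 1%:M : 'M[R]_(1 + q)) = (-1) ^+ q * q%:R).
set u : 'M[R]_(1, q) := const_mx 1; set v : 'M[R]_(q, 1) := const_mx 1.
have vu : const_mx 1 = v *m u by apply/matrixP => i j; rewrite !mxE big_ord1 !mxE mulr1.
have uv : u *m v = q%:R%:M.
  apply/rowP => i; rewrite ord1 !mxE.
  under eq_bigr do rewrite !mxE mulr1.
  by rewrite sumr_const card_ord.
have Jblock : const_mx 1 - 1%:M = block_mx 0 u v (v *m u - 1%:M) :> 'M[R]_(1 + q).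
  rewrite -block_mx_const scalar_mx_block opp_block_mx add_block_mx !oppr0 !addr0 -vu.
  by congr block_mx; apply/rowP => i; rewrite !mxE ord1 subrr.
(* Subtracting row 0 from the other rows, then adding the other columns to column 0,
   makes the matrix block upper triangular. *)
pose L (w : 'M[R]_(q, 1)) : 'M[R]_(1 + q) := block_mx 1%:M 0 w 1%:M.
have detL w : \det (L w) = 1 by rewrite det_lblock !det1 mulr1.
have : L (- v) *m (const_mx 1 - 1%:M) *m L v = block_mx (u *m v) u 0 (- 1%:M).
  rewrite Jblock !mulmx_block !mul1mx !mul0mx !mulmx0 !addr0 !add0r mulNmx !mulmx1 addKr.
  by rewrite mulNmx mul1mx subrr add0r.
move/(congr1 determinant); rewrite !det_mulmx !detL mul1r mulr1 => ->.
by rewrite det_ublock uv det_scalar1 -scaleN1r detZ det1 mulr1 mulrC.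
Qed.

Lemma det_block_schur k q (P : 'M[R]_k) (Z : 'M[R]_(k, q)) (Q : 'M[R]_q) :
  \det (block_mx P (P *m Z) (Z^T *m P) Q) = \det P * \det (Q - Z^T *m P *m Z).
Proof.
have -> : block_mx P (P *m Z) (Z^T *m P) Q =
    block_mx 1%:M 0 Z^T 1%:M *m block_mx P (P *m Z) 0 (Q - Z^T *m P *m Z).
  by rewrite mulmx_block !mul1mx !mul0mx !addr0 mulmxA addrC subrK.
by rewrite det_mulmx det_lblock det_ublock !det1 !mul1r.
Qed.

End BlockDeterminants.

Section SubmatrixCat.
Variables (R : Type) (m n : nat) (A : 'M[R]_(m, n)).

Lemma mxsub_catl p1 p2 q (s1 : p1.-tuple 'I_m) (s2 : p2.-tuple 'I_m) (t : q.-tuple 'I_n) :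
  mxsub (tnth [tuple of s1 ++ s2]) (tnth t) A =
  col_mx (mxsub (tnth s1) (tnth t) A) (mxsub (tnth s2) (tnth t) A).
Proof.
apply/matrixP => i j; rewrite -[i]splitK.
by case: (split i) => i'; rewrite ?col_mxEu ?col_mxEd !mxE ?tnth_lshift ?tnth_rshift.
Qed.

Lemma mxsub_catr p q1 q2 (s : p.-tuple 'I_m) (t1 : q1.-tuple 'I_n) (t2 : q2.-tuple 'I_n) :
  mxsub (tnth s) (tnth [tuple of t1 ++ t2]) A =
  row_mx (mxsub (tnth s) (tnth t1) A) (mxsub (tnth s) (tnth t2) A).
Proof.
apply/matrixP => i j; rewrite -[j]splitK.
by case: (split j) => j'; rewrite ?row_mxEl ?row_mxEr !mxE ?tnth_lshift ?tnth_rshift.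
Qed.

Lemma mxsub_cat p1 p2 q1 q2 (s1 : p1.-tuple 'I_m) (s2 : p2.-tuple 'I_m)
    (t1 : q1.-tuple 'I_n) (t2 : q2.-tuple 'I_n) :
  mxsub (tnth [tuple of s1 ++ s2]) (tnth [tuple of t1 ++ t2]) A =
  block_mx (mxsub (tnth s1) (tnth t1) A) (mxsub (tnth s1) (tnth t2) A)
           (mxsub (tnth s2) (tnth t1) A) (mxsub (tnth s2) (tnth t2) A).
Proof. by rewrite mxsub_catl !mxsub_catr. Qed.

End SubmatrixCat.

Section SignedProducts.
Local Open Scope ring_scope.

Lemma signr_prod_cards (R : comNzRingType) (T : finType) (C : {set {set T}})
    (F : {set T} -> R) k :
    {in C, forall X : {set T}, 1 < #|X|}%N ->
    (\sum_(X in C) (#|X| - 2) = k - 2)%N -> (2 < k)%N ->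
  (-1) ^+ (#|C| - 1) * \prod_(X in C) ((-1) ^+ (#|X| - 1) * F X) =
  (-1) ^+ (k - 1) * \prod_(X in C) F X.
Proof.
move=> C_big C_sum k_big; rewrite big_split /= prodrXr mulrA -exprD.
have C0 : (0 < #|C|)%N.
  rewrite lt0n cards_eq0; apply: contraTneq k_big => C0.
  by move: C_sum; rewrite C0 big_set0; lia.
have -> : (\sum_(X in C) (#|X| - 1) = \sum_(X in C) (#|X| - 2) + #|C|)%N.
  by rewrite -sum1_card -big_split /=; apply: eq_bigr => X /C_big; lia.
have -> : (#|C| - 1 + (\sum_(X in C) (#|X| - 2) + #|C|) = k - 1 + (#|C| - 1) * 2)%N.
  by rewrite C_sum; lia.
by rewrite exprD exprM sqrr_sign mulr1.
Qed.

End SignedProducts.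

Section PrincipalMinors.
Local Open Scope ring_scope.
Variables (R : comNzRingType) (n : nat) (M : 'M[R]_n).

Definition pminor k (t : k.-tuple 'I_n) : R := \det (mxsub (tnth t) (tnth t) M).

Lemma pminor_perm_eq k1 k2 (t1 : k1.-tuple 'I_n) (t2 : k2.-tuple 'I_n) :
  perm_eq t1 t2 -> pminor t1 = pminor t2.
Proof.
move=> t12; have ek : k1 = k2 by rewrite -(size_tuple t1) -(size_tuple t2) (perm_size t12).
subst k2; have [p /val_inj ->] := tuple_permP t12; rewrite /pminor.
set B := mxsub (tnth t2) (tnth t2) M.
have -> : mxsub (tnth [tuple tnth t2 (p i) | i < k1]) (tnth [tuple tnth t2 (p i) | i < k1]) M
    = row_perm p (col_perm p B).
  by apply/matrixP => i j; rewrite !mxE !tnth_mktuple.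
by rewrite row_permE col_permE !det_mulmx !det_perm odd_permV mulrCA -expr2 sqrr_sign mulr1.
Qed.

Lemma pminor_ord_tuple : pminor (ord_tuple n) = \det M.
Proof. by rewrite /pminor; congr (\det _); apply/matrixP => i j; rewrite !mxE !tnth_ord_tuple. Qed.

Hypothesis M_sym : M^T = M.

Lemma tr_mxsub k l (u : k.-tuple 'I_n) (v : l.-tuple 'I_n) :
  (mxsub (tnth u) (tnth v) M)^T = mxsub (tnth v) (tnth u) M.
Proof. by rewrite -{2}M_sym; apply/matrixP => i j; rewrite !mxE. Qed.

Variables a b : 'I_n.
Hypotheses (Maa : M a a = 0) (Mbb : M b b = 0) (Mab : M a b = 1).
Let ab := [tuple a; b].
Let ba := [tuple b; a].

Let Mba : M b a = 1. Proof. by rewrite -Mab -{1}M_sym mxE. Qed.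

Lemma pminor_cat_schur p q (s : p.-tuple 'I_n) (t : q.-tuple 'I_n) :
    {in s & t, forall x y, M x y = M x a * M b y + M x b * M a y} ->
  pminor [tuple of (ab ++ s) ++ t] =
  pminor [tuple of ab ++ s] *
  \det (mxsub (tnth t) (tnth t) M - mxsub (tnth t) (tnth ab) M *m mxsub (tnth ba) (tnth t) M).
Proof.
move=> ptolemy; set P := mxsub (tnth [tuple of ab ++ s]) (tnth [tuple of ab ++ s]) M.
(* Z is supported on the rows of a and b: the Ptolemy relation says that the off-diagonal
   block is P *m Z. *)
pose Z := col_mx (mxsub (tnth ba) (tnth t) M) 0 : 'M_(2 + p, q).
have mulZ k (u : k.-tuple 'I_n) : mxsub (tnth u) (tnth [tuple of ab ++ s]) M *m Z =
    mxsub (tnth u) (tnth ab) M *m mxsub (tnth ba) (tnth t) M.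
  by rewrite mxsub_catr mul_row_col mulmx0 addr0.
have PZ : mxsub (tnth [tuple of ab ++ s]) (tnth t) M = P *m Z.
  rewrite mulZ; apply/matrixP => i j; rewrite !mxE big_ord_recl big_ord1 !mxE /=.
  have := mem_tnth i [tuple of ab ++ s]; rewrite mem_cat => /orP [|xs].
    by rewrite !inE => /orP [] /eqP ->; rewrite ?Maa ?Mbb ?Mab ?Mba mul0r mul1r ?addr0 ?add0r.
  by rewrite ptolemy ?mem_tnth.
have PT : P^T = P := tr_mxsub _ _.
rewrite /pminor -/P mxsub_cat -/P PZ -[mxsub (tnth t) _ M]tr_mxsub PZ trmx_mul PT.
by rewrite det_block_schur -[X in Z^T *m X]PT -trmx_mul -PZ tr_mxsub mulZ.
Qed.

Lemma pminor_cat_ptolemy p q (s : p.-tuple 'I_n) (t : q.-tuple 'I_n) :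
    {in s & t, forall x y, M x y = M x a * M b y + M x b * M a y} ->
  pminor [tuple of (ab ++ s) ++ t] = - (pminor [tuple of ab ++ s] * pminor [tuple of ab ++ t]).
Proof.
move=> ptolemy; have minor_ab : pminor ab = -1.
  rewrite /pminor (_ : mxsub _ _ M = const_mx 1 - 1%:M) ?det_const1_sub1 ?expr1 ?mulr1 //.
  apply/matrixP => i j; rewrite !mxE.
  by case: i j => [[|[|?]] ?] [[|[|?]] ?] //=; rewrite ?subr0 ?subrr.
have minor_ab_nil : pminor [tuple of ab ++ [tuple]] = -1.
  by rewrite -minor_ab; apply: pminor_perm_eq.
have minor_ab_t : pminor [tuple of (ab ++ [tuple]) ++ t] = pminor [tuple of ab ++ t].
  by apply: pminor_perm_eq.
have := @pminor_cat_schur 0 q [tuple] t; rewrite minor_ab_t minor_ab_nil => -> //.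
by rewrite (pminor_cat_schur ptolemy) mulN1r mulrN opprK.
Qed.

End PrincipalMinors.

Section Polygon.
Variable n : nat.
Implicit Types (a b i j k l u v x y z : 'I_n) (S T X : {set 'I_n}).

Definition strictly_outside a b z : bool := (z < minn a b)%N || (maxn a b < z)%N.

(* lia does not see through boolean atoms such as [x \in X], so these are case-split first. *)
Ltac polygon_lia :=
  repeat match goal with |- context [?x \in ?X] => case: (x \in X) end;
  rewrite /cross -?(inj_eq val_inj) /strictly_between /strictly_outside /=; lia.

Lemma cross_sym i j k l : cross i j k l = cross k l i j.
Proof. polygon_lia. Qed.

Lemma cross_swapl i j k l : cross i j k l = cross j i k l.
Proof. polygon_lia. Qed.

Lemma cross_swapr i j k l : cross i j k l = cross i j l k.
Proof. polygon_lia. Qed.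

Lemma cross_same i k l : cross i i k l = false.
Proof. polygon_lia. Qed.

Lemma cross_sides x y a b : cross x y a b ->
  strictly_between a b x && strictly_outside a b y ||
  strictly_between a b y && strictly_outside a b x.
Proof. polygon_lia. Qed.

Lemma cross_neq x y k l : cross x y k l -> k != l.
Proof. polygon_lia. Qed.

Lemma cross_between_outside x y a b :
  strictly_between a b x -> strictly_outside a b y -> cross x y a b.
Proof. polygon_lia. Qed.

Lemma cross_not_outside a b u v k l : ~~ strictly_outside a b u -> ~~ strictly_outside a b v ->
  cross u v k l -> ~~ cross a b k l -> ~~ strictly_outside a b k.
Proof. polygon_lia. Qed.

Lemma cross_not_between a b u v k l : ~~ strictly_between a b u -> ~~ strictly_between a b v ->
  cross u v k l -> ~~ cross a b k l -> ~~ strictly_between a b k.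
Proof. polygon_lia. Qed.

Section Dissection.
Variable D : {set {set 'I_n}}.
Hypothesis D_dissection : dissection D.

Lemma uncrossedP T :
  reflect (forall x y k l, x \in T -> y \in T -> [set k; l] \in D -> ~~ cross x y k l)
          (uncrossed D T).
Proof.
apply: (iffP forall_inP) => [uT x y k l xT yT klD | uT x xT].
  move/forall_inP: (uT x xT) => /(_ y yT); apply: contra => xy_kl.
  by apply/existsP; exists k; apply/existsP; exists l; rewrite klD.
apply/forall_inP => y yT; apply/existsP => -[k /existsP [l /andP [klD]]].
by apply/negP; apply: uT.
Qed.

Lemma uncrossed_diagonal a b : [set a; b] \in D -> uncrossed D [set a; b].
Proof.
move=> abD; apply/uncrossedP => x y k l; rewrite !inE.
move=> /orP [] /eqP -> /orP [] /eqP -> klD; rewrite ?cross_same //.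
  exact: D_dissection.2.
by rewrite cross_swapl; apply: D_dissection.2.
Qed.

Definition crossing_closed S := forall x y k l,
  x \in S -> y \in S -> [set k; l] \in D -> cross x y k l -> k \in S.

Definition cells_in S : {set {set 'I_n}} :=
  [set T | maxset [pred T : {set 'I_n} | (T \subset S) && uncrossed D T] T].

Lemma cells_in_setT : cells_in [set: 'I_n] = cells D.
Proof. by apply/setP => T; rewrite !inE; apply: maxset_eq => T'; rewrite /= subsetT. Qed.

Lemma cells_in_uncrossed S : uncrossed D S -> cells_in S = [set S].
Proof.
move=> uS; apply/setP => T; rewrite !inE; apply/maxsetP/eqP => [[/andP [TS _] maxT]|->].
  by apply/esym/maxT => //; rewrite /= subxx.
split=> [|T' /andP [T'S _] ST']; first by rewrite /= subxx.
by apply/eqP; rewrite eqEsubset T'S.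
Qed.

Lemma mem_cells_in S T : T \in cells_in S -> (T \subset S) && uncrossed D T.
Proof. by rewrite inE => /maxsetp. Qed.

Lemma cells_in_restrict X S T : X \subset S -> T \subset X -> T \in cells_in S -> T \in cells_in X.
Proof.
move=> XS TX; rewrite !inE => /maxsetP [/andP [_ uT] maxT].
apply/maxsetP; split=> [|T' /andP [T'X uT'] TT']; first by rewrite /= TX.
by apply: maxT; rewrite //= (subset_trans T'X XS).
Qed.

Lemma cells_in_extend X S T : X \subset S -> T \in cells_in X ->
  (forall T', T' \subset S -> uncrossed D T' -> T \subset T' -> T' \subset X) ->
  T \in cells_in S.
Proof.
move=> XS; rewrite !inE => /maxsetP [/andP [TX uT] maxT] inX.
apply/maxsetP; split=> [|T' /andP [T'S uT'] TT']; first by rewrite /= (subset_trans TX XS).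
by apply: maxT; rewrite //= inX.
Qed.

Definition inner_part a b S := [set z in S | ~~ strictly_outside a b z].
Definition outer_part a b S := [set z in S | ~~ strictly_between a b z].

Definition splits a b S :=
  ([set a; b] \in D) && [exists x in S, exists y in S, cross x y a b].

Lemma splits_neq a b S : splits a b S -> a != b.
Proof. by case/andP => _ /exists_inP [x _ /exists_inP [y _ /cross_neq]]. Qed.

Section Split.
Variables (S : {set 'I_n}) (a b : 'I_n).
Hypotheses (S_closed : crossing_closed S) (S_split : splits a b S).
Local Notation A := (inner_part a b S).
Local Notation B := (outer_part a b S).

Let abD : [set a; b] \in D. Proof. by case/andP: S_split. Qed.

Let crossing_pair : exists x y, [/\ x \in S, y \in S & cross x y a b].
Proof.
case/andP: S_split => _ /exists_inP [x xS /exists_inP [y yS xy_ab]].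
by exists x, y.
Qed.

Let ab : a != b := splits_neq S_split.

Let aS : a \in S. Proof. by have [x [y [xS yS xy_ab]]] := crossing_pair; apply: S_closed xy_ab. Qed.

Let bS : b \in S.
Proof.
have [x [y [xS yS xy_ab]]] := crossing_pair.
by apply: (S_closed (l := a) xS yS); rewrite 1?setUC // cross_swapr.
Qed.

Let inner_witness : exists2 u, u \in S & strictly_between a b u.
Proof.
have [x [y [xS yS /cross_sides /orP [] /andP [? _]]]] := crossing_pair; first by exists x.
by exists y.
Qed.

Let outer_witness : exists2 v, v \in S & strictly_outside a b v.
Proof.
have [x [y [xS yS /cross_sides /orP [] /andP [_ ?]]]] := crossing_pair; first by exists y.
by exists x.
Qed.

Lemma inner_partE : A = [set a; b] :|: [set z in S | strictly_between a b z].
Proof.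
apply/setP => z; rewrite !inE.
have [->|za] := eqVneq z a; first by rewrite aS; polygon_lia.
have [->|zb] := eqVneq z b; first by rewrite bS; polygon_lia.
by move: za zb; polygon_lia.
Qed.

Lemma outer_partE : B = [set a; b] :|: [set z in S | strictly_outside a b z].
Proof.
apply/setP => z; rewrite !inE.
have [->|za] := eqVneq z a; first by rewrite aS; polygon_lia.
have [->|zb] := eqVneq z b; first by rewrite bS; polygon_lia.
by move: za zb; polygon_lia.
Qed.

Lemma inner_outsideU : S = A :|: [set z in S | strictly_outside a b z].
Proof. apply/setP => z; rewrite !inE; polygon_lia. Qed.

Lemma inner_outside_disjoint : [disjoint A & [set z in S | strictly_outside a b z]].
Proof. rewrite -setI_eq0; apply/eqP/setP => z; rewrite !inE; polygon_lia. Qed.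

Lemma perm_enum_inner_part :
  perm_eq (enum A) ([:: a; b] ++ enum [set z in S | strictly_between a b z]).
Proof.
rewrite inner_partE; apply: perm_trans (perm_enum_setU _) _.
  by rewrite -setI_eq0; apply/eqP/setP => z; rewrite !inE; polygon_lia.
by rewrite perm_cat2r perm_enum_set2.
Qed.

Lemma perm_enum_outer_part :
  perm_eq (enum B) ([:: a; b] ++ enum [set z in S | strictly_outside a b z]).
Proof.
rewrite outer_partE; apply: perm_trans (perm_enum_setU _) _.
  by rewrite -setI_eq0; apply/eqP/setP => z; rewrite !inE; polygon_lia.
by rewrite perm_cat2r perm_enum_set2.
Qed.

Lemma perm_enum_split : perm_eq (enum S)
  (([:: a; b] ++ enum [set z in S | strictly_between a b z]) ++
    enum [set z in S | strictly_outside a b z]).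
Proof.
rewrite {1}inner_outsideU; apply: perm_trans (perm_enum_setU inner_outside_disjoint) _.
by rewrite perm_cat2r perm_enum_inner_part.
Qed.

Lemma inner_outer_card : (#|A| + #|B| = #|S| + 2)%N.
Proof.
rewrite -cardsUI.
have -> : A :|: B = S by apply/setP => z; rewrite !inE; polygon_lia.
have -> : A :&: B = [set a; b].
  apply/setP => z; rewrite !inE.
  have [->|za] := eqVneq z a; first by rewrite aS; polygon_lia.
  have [->|zb] := eqVneq z b; first by rewrite bS; polygon_lia.
  by move: za zb; polygon_lia.
by rewrite cards2 ab.
Qed.

Lemma inner_outer_subset_card T : T \subset A -> T \subset B -> (#|T| <= 2)%N.
Proof.
move=> TA TB; have TS2 : T \subset [set a; b].
  by apply/subsetP => z zT; move: (subsetP TA z zT) (subsetP TB z zT); rewrite !inE; polygon_lia.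
by rewrite (leq_trans (subset_leq_card TS2)) // cards2 ab.
Qed.

Lemma inner_part_proper : A \proper S.
Proof.
have [v vS v_out] := outer_witness.
apply/properP; split; first by apply/subsetP => z; rewrite inE => /andP [].
by exists v; rewrite // inE v_out andbF.
Qed.

Lemma outer_part_proper : B \proper S.
Proof.
have [u uS u_in] := inner_witness.
apply/properP; split; first by apply/subsetP => z; rewrite inE => /andP [].
by exists u; rewrite // inE u_in andbF.
Qed.

Lemma inner_part_card : (2 < #|A|)%N.
Proof.
have [u uS u_in] := inner_witness.
have : [set a; b] \proper A.
  apply/properP; split; last by exists u; rewrite !inE ?uS; move: u_in; polygon_lia.
  by apply/subsetP => z; rewrite !inE => /orP [] /eqP ->; rewrite ?aS ?bS; polygon_lia.
by move/proper_card; rewrite cards2 ab.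
Qed.

Lemma outer_part_card : (2 < #|B|)%N.
Proof.
have [v vS v_out] := outer_witness.
have : [set a; b] \proper B.
  apply/properP; split; last by exists v; rewrite !inE ?vS; move: v_out; polygon_lia.
  by apply/subsetP => z; rewrite !inE => /orP [] /eqP ->; rewrite ?aS ?bS; polygon_lia.
by move/proper_card; rewrite cards2 ab.
Qed.

Lemma inner_part_closed : crossing_closed A.
Proof.
move=> u v k l; rewrite !inE => /andP [uS u_in] /andP [vS v_in] klD uv_kl.
rewrite (S_closed uS vS klD uv_kl); apply: (cross_not_outside u_in v_in uv_kl).
exact: D_dissection.2.
Qed.

Lemma outer_part_closed : crossing_closed B.
Proof.
move=> u v k l; rewrite !inE => /andP [uS u_in] /andP [vS v_in] klD uv_kl.
rewrite (S_closed uS vS klD uv_kl); apply: (cross_not_between u_in v_in uv_kl).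
exact: D_dissection.2.
Qed.

Lemma uncrossed_split T : T \subset S -> uncrossed D T -> (T \subset A) || (T \subset B).
Proof.
move=> TS uT; have [z /andP [zT z_in]|no_in] := pickP [pred z in T | strictly_between a b z].
  apply/orP; left; apply/subsetP => w wT; rewrite inE (subsetP TS w wT) /=.
  apply: contra (uncrossedP _ uT z w a b zT wT abD) => w_out.
  exact: cross_between_outside.
apply/orP; right; apply/subsetP => w wT; rewrite inE (subsetP TS w wT) /=.
by move: (no_in w); rewrite /= wT => /negbT.
Qed.

Lemma cells_in_split : {in cells_in A, forall T, 2 < #|T|}%N ->
  {in cells_in B, forall T, 2 < #|T|}%N -> cells_in S = cells_in A :|: cells_in B.
Proof.
move=> bigA bigB; have AS := proper_sub inner_part_proper; have BS := proper_sub outer_part_proper.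
apply/setP => T; rewrite in_setU; apply/idP/orP => [T_S | [T_A | T_B]].
- have /andP [TS uT] := mem_cells_in T_S.
  by case/orP: (uncrossed_split TS uT) => [TA|TB]; [left|right]; apply: cells_in_restrict T_S.
- apply: (cells_in_extend AS T_A) => T' T'S uT' TT'; case/orP: (uncrossed_split T'S uT') => // T'B.
  have /andP [TA _] := mem_cells_in T_A.
  have := bigA T T_A.
  by rewrite ltnNge inner_outer_subset_card // (subset_trans TT' T'B).
- apply: (cells_in_extend BS T_B) => T' T'S uT' TT'; case/orP: (uncrossed_split T'S uT') => // T'A.
  have /andP [TB _] := mem_cells_in T_B.
  have := bigB T T_B.
  by rewrite ltnNge inner_outer_subset_card // (subset_trans TT' T'A).
Qed.

Lemma cells_in_split_disjoint : {in cells_in A, forall T, 2 < #|T|}%N ->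
  [disjoint cells_in A & cells_in B].
Proof.
move=> big; rewrite -setI_eq0; apply/eqP/setP => T; rewrite in_setI in_set0.
apply/negP => /andP [T_A T_B]; have := big T T_A.
have /andP [TA _] := mem_cells_in T_A; have /andP [TB _] := mem_cells_in T_B.
by rewrite ltnNge inner_outer_subset_card.
Qed.

End Split.

Lemma crossing_closed_ind (P : {set 'I_n} -> Prop) :
  (forall S, uncrossed D S -> (2 < #|S|)%N -> P S) ->
  (forall S a b, crossing_closed S -> splits a b S ->
     P (inner_part a b S) -> P (outer_part a b S) -> P S) ->
  forall S, crossing_closed S -> (2 < #|S|)%N -> P S.
Proof.
move=> Puncrossed Psplit S; have [k le_Sk] := ubnP #|S|.
elim: k S le_Sk => // k IHk S le_Sk S_closed S_big.
have [uS|] := boolP (uncrossed D S); first exact: Puncrossed.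
case/forall_inPn => x xS /forall_inPn [y yS /negPn /existsP [a /existsP [b /andP [abD xy_ab]]]].
have S_split : splits a b S.
  by rewrite /splits abD; apply/exists_inP; exists x => //; apply/exists_inP; exists y.
have IH X : X \proper S -> crossing_closed X -> (2 < #|X|)%N -> P X.
  by move=> XS; apply: IHk; move: (proper_card XS) le_Sk; lia.
apply: (Psplit S a b) => //; apply: IH.
- exact: inner_part_proper S_split.
- exact: inner_part_closed S_closed S_split.
- exact: inner_part_card S_closed S_split.
- exact: outer_part_proper S_split.
- exact: outer_part_closed S_closed S_split.
- exact: outer_part_card S_closed S_split.
Qed.

Lemma cells_in_card S : crossing_closed S -> (2 < #|S|)%N ->
  {in cells_in S, forall T, 2 < #|T|}%N /\
  (\sum_(T in cells_in S) (#|T| - 2) = #|S| - 2)%N.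
Proof.
move: S; apply: crossing_closed_ind.
  move=> S uS S_big /=; rewrite cells_in_uncrossed // big_set1.
  by split=> // T; rewrite inE => /eqP ->.
move=> S a b S_closed S_split [bigA sumA] [bigB sumB] /=.
rewrite (cells_in_split S_closed S_split bigA bigB); split=> [T|].
  by rewrite in_setU => /orP [/bigA|/bigB].
have dAB := cells_in_split_disjoint S_closed S_split bigA.
rewrite big_setU_disjoint // sumA sumB.
move: (inner_outer_card S_closed S_split) (inner_part_card S_closed S_split).
by move: (outer_part_card S_closed S_split) => /=; lia.
Qed.

End Dissection.
End Polygon.

Section FriezeMatrix.
Local Open Scope ring_scope.
Variables (K : fieldType) (n : nat) (D : {set {set 'I_n}}) (f : {set 'I_n} -> K).
Hypotheses (D_dissection : dissection D) (f_frieze : weak_frieze D f).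
Hypothesis f_cells : forall S, S \in cells D ->
  forall i j : 'I_n, i \in S -> j \in S -> i != j -> f [set i; j] = 1.
Local Notation M := (frieze_matrix f).

Lemma frieze_matrix_tr : M^T = M.
Proof. by apply/matrixP => i j; rewrite !mxE eq_sym setUC. Qed.

Lemma frieze_matrix_diag x : M x x = 0.
Proof. by rewrite mxE eqxx. Qed.

Lemma frieze_matrix_uncrossed T x y :
  uncrossed D T -> x \in T -> y \in T -> x != y -> M x y = 1.
Proof.
move=> uT xT yT xy; have [C C_max TC] := maxset_exists uT.
by rewrite mxE (negbTE xy); apply: (f_cells (S := C)); rewrite ?inE ?(subsetP TC).
Qed.

Lemma frieze_matrix_diagonal a b : [set a; b] \in D -> a != b -> M a b = 1.
Proof.
move=> abD; apply: (frieze_matrix_uncrossed (uncrossed_diagonal D_dissection abD));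
  by rewrite !inE eqxx ?orbT.
Qed.

Lemma frieze_matrix_ptolemy a b x y : [set a; b] \in D ->
  strictly_between a b x -> strictly_outside a b y -> M x y = M x a * M b y + M x b * M a y.
Proof.
move=> abD x_in y_out; have xy_ab := cross_between_outside x_in y_out.
have xy : x != y by rewrite cross_sym in xy_ab; apply: cross_neq xy_ab.
have fab : f [set a; b] = 1.
  have ab := cross_neq xy_ab.
  by have := frieze_matrix_diagonal abD ab; rewrite mxE (negbTE ab).
case/and5P: (xy_ab) => ax ay bx b_y _.
rewrite !mxE (negbTE xy) (eq_sym x a) (eq_sym x b) (negbTE ax) (negbTE bx) (negbTE ay) (negbTE b_y).
rewrite (setUC [set b]) (setUC [set a]) -[LHS]mulr1 -fab.
by apply: f_frieze; rewrite ?abD ?orbT.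
Qed.

Lemma pminor_uncrossed S : uncrossed D S -> (0 < #|S|)%N ->
  pminor M (enum_tuple S) = (-1) ^+ (#|S| - 1) * (#|S| - 1)%:R.
Proof.
move=> uS S0; rewrite /pminor -det_const1_sub1 //; congr (\det _); apply/matrixP => i j.
have tS k : tnth (enum_tuple S) k \in S by rewrite -mem_enum; apply: mem_tnth.
have inj_t := tuple_uniqP (enum_tuple S) (enum_uniq S).
rewrite !mxE (inj_eq inj_t); case: eqP => [_|/eqP ij]; first by rewrite subrr.
have := frieze_matrix_uncrossed uS (tS i) (tS j).
by rewrite mxE !(inj_eq inj_t) (negbTE ij) subr0; apply.
Qed.

Lemma pminor_split S a b : crossing_closed D S -> splits D a b S ->
  pminor M (enum_tuple S) =
  - (pminor M (enum_tuple (inner_part a b S)) * pminor M (enum_tuple (outer_part a b S))).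
Proof.
move=> S_closed S_split; have /andP [abD _] := S_split.
set s := in_tuple (enum [set z in S | strictly_between a b z]).
set t := in_tuple (enum [set z in S | strictly_outside a b z]).
have eS := perm_enum_split S_closed S_split.
have eA := perm_enum_inner_part S_closed S_split.
have eB := perm_enum_outer_part S_closed S_split.
rewrite (pminor_perm_eq M (t2 := [tuple of ([tuple a; b] ++ s) ++ t]) eS).
rewrite (pminor_perm_eq M (t2 := [tuple of [tuple a; b] ++ s]) eA).
rewrite (pminor_perm_eq M (t2 := [tuple of [tuple a; b] ++ t]) eB).
apply: (pminor_cat_ptolemy frieze_matrix_tr (frieze_matrix_diag a) (frieze_matrix_diag b)).
  exact: frieze_matrix_diagonal abD (splits_neq S_split).
move=> u v; rewrite !mem_enum !inE => /andP [_ u_in] /andP [_ v_out].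
exact: frieze_matrix_ptolemy.
Qed.

Lemma pminor_cells S : crossing_closed D S -> (2 < #|S|)%N ->
  pminor M (enum_tuple S) =
  (-1) ^+ (#|S| - 1) * \prod_(T in cells_in D S) (#|T| - 1)%:R.
Proof.
move: S; apply: (crossing_closed_ind D_dissection).
  move=> S uS S_big /=; rewrite (cells_in_uncrossed uS) big_set1.
  by rewrite pminor_uncrossed // (ltnW (ltnW S_big)).
move=> S a b S_closed S_split detA detB /=.
have A_big := inner_part_card S_closed S_split.
have B_big := outer_part_card S_closed S_split.
have A_closed := inner_part_closed D_dissection S_closed S_split.
have B_closed := outer_part_closed D_dissection S_closed S_split.
have [bigA _] := cells_in_card D_dissection A_closed A_big.
have [bigB _] := cells_in_card D_dissection B_closed B_big.
rewrite (pminor_split S_closed S_split) detA detB.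
rewrite (cells_in_split S_closed S_split bigA bigB) big_setU_disjoint /=; last first.
  exact: cells_in_split_disjoint S_closed S_split bigA.
have sizes : (#|inner_part a b S| - 1 + (#|outer_part a b S| - 1) = (#|S| - 1).+1)%N.
  by move: (inner_outer_card S_closed S_split) A_big B_big; lia.
by rewrite mulrACA -exprD sizes exprS mulN1r mulNr opprK.
Qed.

End FriezeMatrix.

Local Open Scope ring_scope.

Theorem corollary4p1 (K : fieldType) (n : nat) (D : {set {set 'I_n}})
    (f : {set 'I_n} -> K) :
  (3 <= n)%N ->
  dissection D ->
  weak_frieze D f ->
  (forall S, S \in cells D -> forall i j : 'I_n, i \in S -> j \in S -> i != j ->
     f [set i; j] = 1) ->
  \det (frieze_matrix f) =
    (-1) ^+ (#|cells D| - 1) *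
      \prod_(S in cells D) ((-1) ^+ (#|S| - 1) * (#|S| - 1)%:R)
  /\
  \det (frieze_matrix f) =
    (-1) ^+ (n - 1) * \prod_(S in cells D) (#|S| - 1)%:R.
Proof.
move=> n_big D_dissection f_frieze f_cells.
have setT_closed : crossing_closed D [set: 'I_n] by move=> *; rewrite inE.
have setT_big : (2 < #|[set: 'I_n]|)%N by rewrite cardsT card_ord.
have [cells_big cells_sum] := cells_in_card D_dissection setT_closed setT_big.
have := pminor_cells D_dissection f_frieze f_cells setT_closed setT_big.
have enum_setT_ord : perm_eq (enum [set: 'I_n]) (ord_tuple n).
  by rewrite val_ord_tuple; apply: uniq_perm; rewrite ?enum_uniq // => i; rewrite !mem_enum inE.
rewrite (pminor_perm_eq _ enum_setT_ord) pminor_ord_tuple cells_in_setT cardsT card_ord.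
move=> det_cells.
rewrite cells_in_setT cardsT card_ord in cells_big cells_sum.
have cells_gt1 : {in cells D, forall X : {set 'I_n}, 1 < #|X|}%N by move=> X /cells_big /ltnW.
by split; rewrite // det_cells (signr_prod_cards _ cells_gt1 cells_sum n_big).
Qed.
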